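(* For every integer $n \ge 2$, let $F_n(x) = \sum_{k=1}^{n} x^{\log k}$ for $0 < x \le 1$. Then $$\frac{\pi^2}{6} \sum_{\substack{p \le n\\ p \text{ prime}}} \frac{1}{\log p} \;\ge\; \int_0^1 \frac{\log F_n(x)}{x}\, dx.$$
   Context: $\log$ denotes the natural logarithm; the sum runs over all primes $p \le n$. *)

From Stdlib Require Import Reals ZArith Znumtheory.
Open Scope R_scope.

Definition F (n : nat) (x : R) : R :=
  sum_f_R0 (fun j => Rpower x (ln (INR (j + 1)))) (n - 1).

Definition prime_inv_log_sum (n : nat) : R :=
  sum_f_R0 (fun k => if prime_dec (Z.of_nat k) then / ln (INR k) else 0) n.

(* Improper Riemann integral over (0,1]:  int_0^1 f = L  means f is Riemann
   integrable on every [eps,1] (0 < eps <= 1) and int_eps^1 f -> L as eps -> 0+. *)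
Definition improper_integral_0_1 (f : R -> R) (L : R) : Prop :=
  (forall eps, 0 < eps <= 1 -> exists _ : Riemann_integrable f eps 1, True) /\
  (forall delta, 0 < delta -> exists eta, 0 < eta /\
     forall eps (Heps : 0 < eps < eta) (Hle : eps <= 1)
            (pr : Riemann_integrable f eps 1),
       Rabs (RiemannInt pr - L) < delta).

From Stdlib Require Import Reals ZArith Znumtheory Lia Lra Classical_Prop.
From Coquelicot Require Import Coquelicot.
From mathcomp Require all_boot all_order all_algebra zify Rstruct.
Open Scope R_scope.

(* On (0, 1] the function g k = x ^ (log k) is completely multiplicative with values in
   [0, 1]. Every k <= n is a product of prime powers p ^ j with p, j <= n, hence
     F n x <= prod_(p <= n) sum_(j <= n) g p ^ j,
   and log (1 + y + ... + y ^ n) <= y + y ^ 2 / 2 + ... + y ^ n / n for 0 <= y <= 1.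
   As x ^ (m log p) / x integrates over (0, 1] to 1 / (m log p), this gives
     int_eps^1 log (F n x) / x dx <= sum_(p <= n) sum_(m <= n) 1 / (m ^ 2 log p)
                                  <= zeta(2) sum_(p <= n) 1 / log p,
   where zeta(2) <= PI ^ 2 / 6 follows from sin t < t and the identity
     sum_(k < 2 ^ N) csc ^ 2 ((2 k + 1) PI / 2 ^ (N + 2)) = 2 * 4 ^ N.
   The integrand is nonnegative, so the integral over (0, 1] exists. *)

(** * Finite sums *)

(* [sumR f N = f 0 + ... + f (N - 1)] has exactly [N] terms, unlike [sum_f_R0]. *)
Fixpoint sumR (f : nat -> R) (N : nat) : R :=
  match N with O => 0 | S N' => sumR f N' + f N' end.

Fixpoint prodR (f : nat -> R) (N : nat) : R :=
  match N with O => 1 | S N' => prodR f N' * f N' end.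

Lemma sum_f_R0_sumR f N : sum_f_R0 f N = sumR f (S N).
Proof. induction N as [|N IH]; simpl in *; [lra | now rewrite IH]. Qed.

Lemma sumR_ext f g N : (forall k, (k < N)%nat -> f k = g k) -> sumR f N = sumR g N.
Proof.
induction N as [|N IH]; intros H; simpl; [reflexivity|].
rewrite IH, H; [reflexivity|lia|intros; apply H; lia].
Qed.

Lemma sumR_Sr f N : sumR f (S N) = sumR f N + f N.
Proof. reflexivity. Qed.

Lemma sumR_Sl g N : sumR g (S N) = g O + sumR (fun k => g (S k)) N.
Proof. induction N as [|N IH]; simpl in *; [lra|]. rewrite IH; lra. Qed.

Lemma sumR_scal_l c f N : sumR (fun k => c * f k) N = c * sumR f N.
Proof. induction N as [|N IH]; simpl; [lra|]. rewrite IH; lra. Qed.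

Lemma sumR_const c N : sumR (fun _ => c) N = INR N * c.
Proof. induction N as [|N IH]; simpl sumR; [simpl; lra|]. rewrite IH, S_INR; lra. Qed.

Lemma sumR_le f g N : (forall k, (k < N)%nat -> f k <= g k) -> sumR f N <= sumR g N.
Proof.
induction N as [|N IH]; intros H; simpl; [lra|].
apply Rplus_le_compat; [apply IH; intros; apply H|apply H]; lia.
Qed.

Lemma sumR_nonneg f N : (forall k, (k < N)%nat -> 0 <= f k) -> 0 <= sumR f N.
Proof. intros H. rewrite <- (Rmult_0_r (INR N)), <- sumR_const. now apply sumR_le. Qed.

Lemma sumR_mono f N M : (N <= M)%nat -> (forall k, 0 <= f k) -> sumR f N <= sumR f M.
Proof. intros H Hf. induction H as [|M _ IH]; simpl; [lra|]. specialize (Hf M); lra. Qed.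

Lemma sumR_pairs N g : sumR g (2 * N) = sumR (fun k => g k + g (2 * N - 1 - k)%nat) N.
Proof.
revert g; induction N as [|N IH]; intros g; [simpl; lra|].
replace (2 * S N)%nat with (S (S (2 * N))) by lia.
rewrite sumR_Sl, sumR_Sr, (IH (fun k => g (S k))), sumR_Sl.
rewrite (sumR_ext _ (fun k => g (S k) + g (S (S (2 * N)) - 1 - S k)%nat)).
- replace (S (S (2 * N)) - 1 - 0)%nat with (S (2 * N)) by lia; lra.
- intros k Hk; do 3 f_equal; lia.
Qed.

Lemma sumR_geom z N : sumR (pow z) N * (1 - z) = 1 - z ^ N.
Proof. induction N as [|N IH]; simpl; [lra|]. rewrite Rmult_plus_distr_r, IH; ring. Qed.

Lemma prodR_pos f N : (forall k, (k < N)%nat -> 0 < f k) -> 0 < prodR f N.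
Proof.
induction N as [|N IH]; intros H; simpl; [lra|].
apply Rmult_lt_0_compat; [apply IH; intros|]; apply H; lia.
Qed.

Lemma ln_prodR f N : (forall k, (k < N)%nat -> 0 < f k) ->
  ln (prodR f N) = sumR (fun k => ln (f k)) N.
Proof.
induction N as [|N IH]; intros H; simpl; [apply ln_1|].
rewrite ln_mult, IH; [reflexivity|intros; apply H; lia| |apply H; lia].
apply prodR_pos; intros; apply H; lia.
Qed.

Lemma is_derive_sumR (u u' : nat -> R -> R) N x :
  (forall k, (k < N)%nat -> is_derive (u k) x (u' k x)) ->
  is_derive (fun x => sumR (fun k => u k x) N) x (sumR (fun k => u' k x) N).
Proof.
induction N as [|N IH]; intros H; simpl.
- apply (is_derive_const 0).
- apply (is_derive_plus (fun x => sumR (fun k => u k x) N) (u N)).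
  + apply IH; intros; apply H; lia.
  + apply H; lia.
Qed.

Lemma is_RInt_zero a b : is_RInt (fun _ => 0) a b 0.
Proof.
pose proof (is_RInt_const a b 0) as H0.
rewrite (@scal_zero_r R_Ring R_ModuleSpace) in H0; exact H0.
Qed.

Lemma is_RInt_sumR (u : nat -> R -> R) (I : nat -> R) a b N :
  (forall k, (k < N)%nat -> is_RInt (u k) a b (I k)) ->
  is_RInt (fun x => sumR (fun k => u k x) N) a b (sumR I N).
Proof.
induction N as [|N IH]; intros H; simpl.
- apply is_RInt_zero.
- apply (is_RInt_plus (fun x => sumR (fun k => u k x) N) (u N)).
  + apply IH; intros; apply H; lia.
  + apply H; lia.
Qed.

(** * The bound [sum 1 / k ^ 2 <= PI ^ 2 / 6] *)

Definition csc2 (t : R) : R := / sin t ^ 2.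

Lemma csc2_add_complement t : 0 < t < PI / 2 ->
  csc2 t + csc2 (PI / 2 - t) = 4 * csc2 (2 * t).
Proof.
intros Ht. unfold csc2. rewrite sin_shift, sin_2a.
assert (0 < sin t) by (apply sin_gt_0; lra).
assert (0 < cos t) by (apply cos_gt_0; lra).
assert (sin t ^ 2 + cos t ^ 2 = 1) by (pose proof (sin2_cos2 t); unfold Rsqr in *; lra).
field_simplify_eq; nra.
Qed.

Lemma inv_sqr_le_csc2 t : 0 < t < PI / 2 -> / t ^ 2 <= csc2 t.
Proof.
intros Ht. unfold csc2.
assert (0 < sin t) by (apply sin_gt_0; lra).
assert (sin t < t) by (apply sin_lt_x; lra).
apply Rlt_le, Rinv_lt_contravar; [apply Rmult_lt_0_compat; apply pow_lt|simpl]; nra.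
Qed.

Definition odd_angle (n k : nat) : R := (2 * INR k + 1) * PI / 2 ^ (n + 2).

Lemma odd_angle_range n k : (k < 2 ^ n)%nat -> 0 < odd_angle n k < PI / 2.
Proof.
intros Hk. unfold odd_angle.
assert (INR k + 1 <= 2 ^ n).
{ rewrite <- S_INR, <- (pow_INR 2). apply le_INR; lia. }
pose proof (pos_INR k). pose proof PI_RGT_0. pose proof (pow_lt 2 n).
rewrite pow_add; simpl pow. split.
- apply Rdiv_lt_0_compat; nra.
- apply Rmult_lt_reg_r with (2 ^ n * 4); [nra|].
  unfold Rdiv. field_simplify; nra.
Qed.

(* At level [n + 1] the angles of [k] and [2 ^ (n + 1) - 1 - k] are complementary, and
   [csc2_add_complement] folds each such pair into one term of level [n]. *)
Lemma sum_csc2_odd_angle n : sumR (fun k => csc2 (odd_angle n k)) (2 ^ n) = 2 * 4 ^ n.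
Proof.
induction n as [|n IH].
- simpl. unfold csc2, odd_angle.
  replace ((2 * INR 0 + 1) * PI / 2 ^ (0 + 2)) with (PI / 4) by (simpl; field).
  rewrite sin_PI4. unfold Rdiv. rewrite Rmult_1_l, pow_inv, <- Rsqr_pow2, Rsqr_sqrt; lra.
- replace (2 ^ S n)%nat with (2 * 2 ^ n)%nat by (simpl; lia).
  rewrite sumR_pairs, (sumR_ext _ (fun k => 4 * csc2 (odd_angle n k))).
  + rewrite sumR_scal_l, IH. simpl; lra.
  + intros k Hk.
    assert (Ht : 0 < odd_angle (S n) k < PI / 2) by (apply odd_angle_range; simpl; lia).
    replace (odd_angle (S n) (2 * 2 ^ n - 1 - k)) with (PI / 2 - odd_angle (S n) k).
    * rewrite csc2_add_complement by exact Ht. do 2 f_equal. unfold odd_angle.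
      rewrite Nat.add_succ_l, <- tech_pow_Rmult. field. apply pow_nonzero; lra.
    * unfold odd_angle. rewrite !minus_INR by lia.
      rewrite mult_INR, pow_INR, Nat.add_succ_l, <- tech_pow_Rmult. simpl INR.
      replace (n + 2)%nat with (S (S n)) by lia. simpl pow.
      replace (1 + 1) with 2 by lra. field. apply pow_nonzero; lra.
Qed.

Lemma sum_inv_odd_sqr_le N : sumR (fun k => / (2 * INR k + 1) ^ 2) N <= PI ^ 2 / 8.
Proof.
pose proof PI_RGT_0.
apply Rle_trans with (sumR (fun k => / (2 * INR k + 1) ^ 2) (2 ^ N)).
{ apply sumR_mono; [apply Nat.lt_le_incl, Nat.pow_gt_lin_r; lia|].
  intros k; pose proof (pos_INR k).
  apply Rlt_le, Rinv_0_lt_compat, pow_lt; lra. }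
set (d := (PI / 2 ^ (N + 2)) ^ 2).
assert (Hd : d * (2 * 4 ^ N) = PI ^ 2 / 8).
{ unfold d. replace 4 with (2 ^ 2) by (simpl; lra).
  rewrite <- pow_mult, pow_add. replace (2 * N)%nat with (N + N)%nat by lia.
  rewrite pow_add. field. apply pow_nonzero; lra. }
rewrite <- Hd, <- sum_csc2_odd_angle, <- sumR_scal_l.
apply sumR_le. intros k Hk.
pose proof (inv_sqr_le_csc2 _ (odd_angle_range _ _ Hk)).
assert (Hpos : 0 < d) by (apply pow_lt, Rdiv_lt_0_compat; [|apply pow_lt]; lra).
replace (/ (2 * INR k + 1) ^ 2) with (d * / odd_angle N k ^ 2).
- apply Rmult_le_compat_l; lra.
- unfold d, odd_angle. pose proof (pos_INR k).
  field. split; [lra|]. split; [apply pow_nonzero|]; lra.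
Qed.

Lemma sum_inv_sqr_double N :
  sumR (fun k => / (INR k + 1) ^ 2) (2 * N)
  = sumR (fun k => / (2 * INR k + 1) ^ 2) N + sumR (fun k => / (INR k + 1) ^ 2) N / 4.
Proof.
induction N as [|N IH]; [simpl; lra|].
replace (2 * S N)%nat with (S (S (2 * N))) by lia.
rewrite !sumR_Sr, IH, S_INR, mult_INR. simpl INR.
pose proof (pos_INR N). field. lra.
Qed.

Lemma sum_inv_sqr_le N : sumR (fun k => / (INR k + 1) ^ 2) N <= PI ^ 2 / 6.
Proof.
assert (sumR (fun k => / (INR k + 1) ^ 2) N <= sumR (fun k => / (INR k + 1) ^ 2) (2 * N)).
{ apply sumR_mono; [lia|]. intros k; pose proof (pos_INR k).
  apply Rlt_le, Rinv_0_lt_compat, pow_lt; lra. }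
pose proof (sum_inv_sqr_double N). pose proof (sum_inv_odd_sqr_le N). lra.
Qed.

(** * A truncated logarithmic series *)

Lemma pow_le_1 x k : 0 <= x <= 1 -> x ^ k <= 1.
Proof. intros Hx. rewrite <- (pow1 k). apply pow_incr; lra. Qed.

Lemma sumR_pow_bounds z n : 0 <= z <= 1 -> 1 <= sumR (pow z) (S n) <= INR (S n).
Proof.
intros Hz. split.
- rewrite sumR_Sl. simpl pow at 1.
  assert (0 <= sumR (fun k => z ^ S k) n) by (apply sumR_nonneg; intros; apply pow_le; lra).
  lra.
- rewrite <- (Rmult_1_r (INR (S n))), <- sumR_const.
  apply sumR_le; intros; apply pow_le_1; exact Hz.
Qed.

Lemma ln_le_harmonic n : ln (INR (S n)) <= sumR (fun m => / INR (S m)) n.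
Proof.
induction n as [|n IH]; [simpl; rewrite ln_1; lra|].
assert (Hn : 0 < INR (S n)) by (apply lt_0_INR; lia).
assert (Hinv : 0 < / INR (S n)) by (apply Rinv_0_lt_compat, Hn).
replace (INR (S (S n))) with (INR (S n) * (1 + / INR (S n)))
  by (rewrite (S_INR (S n)); field; lra).
rewrite ln_mult by lra. rewrite sumR_Sr.
assert (ln (1 + / INR (S n)) <= / INR (S n)).
{ rewrite <- (ln_exp (/ INR (S n))) at 2.
  apply ln_le; [lra|]. apply Rlt_le, exp_ineq1; lra. }
lra.
Qed.

Definition log_gap (n : nat) (z : R) : R :=
  sumR (fun m => z ^ S m / INR (S m)) n - ln ((1 - z ^ S n) / (1 - z)).

Lemma is_derive_log_gap n z : 0 <= z < 1 ->
  is_derive (log_gap n) z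
    (z ^ n * (INR (S n) - sumR (pow z) (S n)) / ((1 - z) * sumR (pow z) (S n))).
Proof.
intros Hz.
assert (Hzn : 0 <= z * z ^ n < 1) by (apply (pow_lt_1_compat z (S n)); [lra|lia]).
assert (Hpartial : sumR (pow z) n = (1 - z ^ n) / (1 - z))
  by (rewrite <- sumR_geom; field; lra).
assert (Htotal : sumR (pow z) (S n) = (1 - z ^ S n) / (1 - z))
  by (rewrite <- sumR_geom; field; lra).
unfold log_gap. evar_last.
- apply (is_derive_minus (fun z => sumR (fun m => z ^ S m / INR (S m)) n)).
  + apply (is_derive_sumR (fun m z => z ^ S m / INR (S m)) (fun m z => z ^ m)).
    intros m _. evar_last; [auto_derive; reflexivity|].
    assert (INR (S m) <> 0) by (apply not_0_INR; lia).
    change (match m with O => 1 | S _ => INR m + 1 end) with (INR (S m)).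
    field; assumption.
  + auto_derive; [|reflexivity]. repeat split; try lra.
    apply Rdiv_lt_0_compat; lra.
- change (match n with O => 1 | S _ => INR n + 1 end) with (INR (S n)).
  change (sumR (fun k => z ^ k) n) with (sumR (pow z) n).
  rewrite Hpartial, Htotal. unfold minus, plus, opp; simpl. field. lra.
Qed.

Lemma log_gap_derive_nonneg n z : 0 <= z < 1 ->
  0 <= z ^ n * (INR (S n) - sumR (pow z) (S n)) / ((1 - z) * sumR (pow z) (S n)).
Proof.
intros Hz. pose proof (sumR_pow_bounds z n (conj (proj1 Hz) (Rlt_le _ _ (proj2 Hz)))).
assert (0 <= z ^ n) by (apply pow_le; lra).
apply Rmult_le_pos; [apply Rmult_le_pos; lra|].
apply Rlt_le, Rinv_0_lt_compat, Rmult_lt_0_compat; lra.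
Qed.

Lemma ln_sumR_pow_le n y : 0 <= y <= 1 ->
  ln (sumR (pow y) (S n)) <= sumR (fun m => y ^ S m / INR (S m)) n.
Proof.
intros Hy. destruct (Req_dec y 1) as [->|Hy1].
- rewrite (sumR_ext (pow 1) (fun _ => 1)) by (intros; apply pow1).
  rewrite (sumR_ext (fun m => 1 ^ S m / INR (S m)) (fun m => / INR (S m)))
    by (intros; rewrite pow1; unfold Rdiv; ring).
  rewrite sumR_const, Rmult_1_r. apply ln_le_harmonic.
- destruct (MVT_gen (log_gap n) 0 y (fun z =>
    z ^ n * (INR (S n) - sumR (pow z) (S n)) / ((1 - z) * sumR (pow z) (S n))))
    as [c [Hc Hmvt]]; rewrite Rmin_left, Rmax_right in * by lra.
  + intros z Hz. apply is_derive_log_gap; lra.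
  + intros z Hz. apply continuity_pt_filterlim, (ex_derive_continuous (log_gap n)).
    eexists. apply is_derive_log_gap; lra.
  + assert (Hgap0 : log_gap n 0 = 0).
    { unfold log_gap. rewrite (sumR_ext _ (fun _ => 0)) by (intros; simpl; lra).
      rewrite sumR_const. simpl pow. replace ((1 - 0 * 0 ^ n) / (1 - 0)) with 1 by field.
      rewrite ln_1; ring. }
    pose proof (log_gap_derive_nonneg n c ltac:(lra)).
    assert (Hgap : 0 <= log_gap n y) by nra.
    unfold log_gap in Hgap.
    replace (sumR (pow y) (S n)) with ((1 - y ^ S n) / (1 - y))
      by (rewrite <- sumR_geom; field; lra).
    lra.
Qed.

(** * The Euler product bound *)

Module EulerProduct.
Import all_boot all_order all_algebra zify Rstruct.
Import Order.TTheory GRing.Theory Num.Theory.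

Lemma dvdn_Zdivide d k : (0 < d)%N -> d %| k <-> Z.divide (Z.of_nat d) (Z.of_nat k).
Proof.
move=> d0; split.
  by move/dvdnP=> [q ->]; exists (Z.of_nat q); lia.
move=> [z hz]; apply/dvdnP.
have z0 : Z.le 0 z by nia.
by exists (Z.to_nat z); lia.
Qed.

Lemma Zprime_nat k : Znumtheory.prime (Z.of_nat k) <-> prime k.
Proof.
split.
  move/Znumtheory.prime_alt=> [k1 hk]; apply/primeP; split; first lia.
  move=> d dk.
  have d0 : (0 < d)%N by case: d dk => [|d] //; rewrite dvd0n; lia.
  have dle : (d <= k)%N by apply: dvdn_leq; first lia.
  have /(dvdn_Zdivide _ _ d0) dkZ := dk.
  apply/orP; case: (ltnP 1 d) => d1; last by left; apply/eqP; lia.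
  case: (ltnP d k) => dk'; last by right; apply/eqP; lia.
  by exfalso; apply: (hk (Z.of_nat d)) => //; lia.
move/primeP=> [k1 hk]; apply/Znumtheory.prime_alt; split; first lia.
move=> z zr zk.
have z0 : (0 < Z.to_nat z)%N by lia.
have : Z.to_nat z %| k by apply/dvdn_Zdivide => //; rewrite Z2Nat.id; [exact: zk|lia].
by move/hk=> /orP[] /eqP; lia.
Qed.

Lemma prod_pfactor_logn {n k} : (0 < k <= n)%N -> \prod_(p < n.+1) p ^ logn p k = k.
Proof.
move=> /andP[k0 kn].
by rewrite -[RHS](partnT k0) (widen_partn _ kn) big_mkord; apply: eq_bigl.
Qed.

Lemma expn_logn_gt0 p k : (0 < p ^ logn p k)%N.
Proof. by rewrite expn_gt0; case: p => [|p] //; rewrite lognE. Qed.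

Section CompletelyMultiplicative.
Local Open Scope ring_scope.
Variables (R : numDomainType) (g : nat -> R).
Hypotheses (g_ge0 : forall k, 0 <= g k) (g1 : g 1%N = 1)
  (gM : forall a b, (0 < a)%N -> (0 < b)%N -> g (a * b)%N = g a * g b).

Lemma g_prod I (s : seq I) (F : I -> nat) : (forall i, 0 < F i)%N ->
  g (\prod_(i <- s) F i)%N = \prod_(i <- s) g (F i).
Proof.
move=> F_gt0; elim: s => [|a s IH]; first by rewrite !big_nil.
by rewrite !big_cons gM ?IH ?prodn_gt0.
Qed.

(* Expanding the product gives one term per exponent vector [(j_p)_(p <= n)]; those of the
   form [(logn p k)_p] with [0 < k <= n] are distinct and contribute [g k]. *)
Lemma sum_le_prod_primes n :
  \sum_(k < n) g k.+1 <= \prod_(p < n.+1 | prime p) \sum_(j < n.+1) g (p ^ j)%N.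
Proof.
pose G (p j : 'I_n.+1) := if prime p then g (p ^ j)%N else (j == ord0)%:R.
have -> : \prod_(p < n.+1 | prime p) \sum_(j < n.+1) g (p ^ j)%N
        = \prod_(p < n.+1) \sum_(j < n.+1) G p j.
  rewrite big_mkcond; apply: eq_bigr => p _; rewrite /G; case: (prime p) => //.
  by rewrite big_ord_recl big1 ?addr0.
rewrite bigA_distr_bigA /=.
have k_range (k : 'I_n) : (0 < k.+1 <= n)%N by rewrite ltn0Sn ltn_ord.
pose phi (k : 'I_n) : {ffun 'I_n.+1 -> 'I_n.+1} := [ffun p : 'I_n.+1 => inord (logn p k.+1)].
have phiE k p : phi k p = logn p k.+1 :> nat.
  by rewrite ffunE inordK // ltnS (leq_trans (ltnW (ltn_logl _ _))) ?ltn_ord.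
have phi_inj : injective phi.
  move=> k1 k2 e; apply/val_inj/succn_inj.
  rewrite -(prod_pfactor_logn (k_range k1)) -(prod_pfactor_logn (k_range k2)).
  by apply: eq_bigr => p _; rewrite -!phiE e.
have phi_term k : \prod_(p < n.+1) G p (phi k p) = g k.+1.
  rewrite -[in RHS](prod_pfactor_logn (k_range k)) g_prod; last first.
    by move=> p; apply: expn_logn_gt0.
  apply: eq_bigr => p _; rewrite /G phiE.
  case pp: (prime p) => //.
  have -> : phi k p == ord0 by apply/eqP/val_inj; rewrite /= phiE lognE pp.
  by rewrite lognE pp expn0 g1.
rewrite (eq_bigr (fun k => \prod_(p < n.+1) G p (phi k p))) => [|k _]; last by rewrite phi_term.
rewrite -(big_imset (fun f => \prod_(p < n.+1) G p (f p)) (h := phi) (A := predT)) /=;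
  last by move=> ? ? _ _; apply: phi_inj.
rewrite [leRHS](bigID (mem [set phi k | k in predT])) /= lerDl.
apply: sumr_ge0 => f _; apply: prodr_ge0 => p _; rewrite /G.
by case: (prime p); rewrite ?g_ge0 ?ler0n.
Qed.

End CompletelyMultiplicative.

Local Open Scope ring_scope.

Lemma sumR_big f N : sumR f N = \sum_(k < N) f k.
Proof. by elim: N => [|N IH]; rewrite ?big_ord0 // big_ord_recr /= IH. Qed.

Lemma prodR_big f N : prodR f N = \prod_(k < N) f k.
Proof. by elim: N => [|N IH]; rewrite ?big_ord0 // big_ord_recr /= IH. Qed.

Lemma natpowE m k : Nat.pow m k = (m ^ k)%N.
Proof. by elim: k => [|k IH] //=; rewrite expnS IH. Qed.

(* Stated with [match] rather than [if]: under ssreflect, [if] on a [sumbool] elaborates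
   through [is_left], which is not convertible to the plain [if] used outside this module. *)
Lemma sumR_le_prodR_primes n (g : nat -> R) :
  (forall k, Rle 0 (g k)) -> g 1%N = R1 ->
  (forall a b, (0 < a)%N -> (0 < b)%N -> g (a * b)%N = Rmult (g a) (g b)) ->
  Rle (sumR (fun k => g k.+1) n)
      (prodR (fun p => match prime_dec (Z.of_nat p) with
                       | left _ => sumR (fun j => g (Nat.pow p j)) n.+1
                       | right _ => R1 end) n.+1).
Proof.
move=> g_ge0 g1 gM; apply/RleP.
have -> : prodR (fun p => match prime_dec (Z.of_nat p) with
                          | left _ => sumR (fun j => g (Nat.pow p j)) n.+1
                          | right _ => R1 end) n.+1
          = \prod_(p < n.+1 | prime p) \sum_(j < n.+1) g (p ^ j)%N.
  rewrite prodR_big [RHS]big_mkcond; apply: eq_bigr => p _.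
  case: prime_dec => [pZ | npZ].
    by rewrite (iffLR (Zprime_nat p) pZ) sumR_big; under eq_bigr do rewrite natpowE.
  by have /negbTE -> : ~~ prime p by apply/negP => /Zprime_nat.
by rewrite sumR_big; apply: sum_le_prod_primes => // k; apply/RleP.
Qed.

End EulerProduct.

(** * The integral *)

Lemma Zprime_nat_gt1 p : prime (Z.of_nat p) -> (1 < p)%nat.
Proof. intros [H _]. lia. Qed.

Lemma ln_INR_pos k : (1 < k)%nat -> 0 < ln (INR k).
Proof. intros Hk. rewrite <- ln_1. apply ln_increasing; [lra|apply (lt_INR 1), Hk]. Qed.

Lemma ln_INR_nonneg k : (0 < k)%nat -> 0 <= ln (INR k).
Proof. intros Hk. rewrite <- ln_1. apply ln_le; [lra|apply (le_INR 1), Hk]. Qed.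

Definition pow_ln (x : R) (k : nat) : R := Rpower x (ln (INR k)).

Lemma pow_ln_pos x k : 0 < pow_ln x k.
Proof. apply exp_pos. Qed.

Lemma pow_ln_1 x : pow_ln x 1 = 1.
Proof. unfold pow_ln, Rpower. simpl INR. rewrite ln_1, Rmult_0_l. apply exp_0. Qed.

Lemma pow_ln_mult x a b : (0 < a)%nat -> (0 < b)%nat ->
  pow_ln x (a * b) = pow_ln x a * pow_ln x b.
Proof.
intros Ha Hb. unfold pow_ln.
rewrite mult_INR, ln_mult by (apply lt_0_INR; lia). apply Rpower_plus.
Qed.

Lemma pow_ln_pow x i j : (0 < i)%nat -> pow_ln x (Nat.pow i j) = pow_ln x i ^ j.
Proof.
intros Hi. unfold pow_ln.
rewrite pow_INR, ln_pow, Rmult_comm, <- Rpower_mult by (apply lt_0_INR; lia).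
apply Rpower_pow, exp_pos.
Qed.

Lemma pow_ln_le_1 x k : 0 < x <= 1 -> (0 < k)%nat -> pow_ln x k <= 1.
Proof.
intros Hx Hk. unfold pow_ln.
apply Rle_trans with (Rpower 1 (ln (INR k))).
- apply Rle_Rpower_l; [apply ln_INR_nonneg|]; assumption.
- unfold Rpower; rewrite ln_1, Rmult_0_r, exp_0; lra.
Qed.

Lemma F_eq_sumR n x : (1 <= n)%nat -> F n x = sumR (fun k => pow_ln x (S k)) n.
Proof.
intros Hn. unfold F. rewrite sum_f_R0_sumR. replace (S (n - 1)) with n by lia.
apply sumR_ext. intros k _. unfold pow_ln. now rewrite Nat.add_1_r.
Qed.

Lemma F_ge_1 n x : (1 <= n)%nat -> 1 <= F n x.
Proof.
intros Hn. rewrite F_eq_sumR, <- (Nat.succ_pred n), sumR_Sl, pow_ln_1 by lia.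
assert (0 <= sumR (fun k => pow_ln x (S (S k))) (pred n))
  by (apply sumR_nonneg; intros; apply Rlt_le, pow_ln_pos).
lra.
Qed.

Lemma pow_ln_pow_Rpower x p j : pow_ln x p ^ j = Rpower x (INR j * ln (INR p)).
Proof.
unfold pow_ln. rewrite <- Rpower_pow, Rpower_mult, Rmult_comm by apply exp_pos.
reflexivity.
Qed.

Lemma ln_F_le n x : (1 <= n)%nat -> 0 < x <= 1 ->
  ln (F n x) <= sumR (fun p => if prime_dec (Z.of_nat p)
                               then sumR (fun m => pow_ln x p ^ S m / INR (S m)) n
                               else 0) (S n).
Proof.
intros Hn Hx.
set (euler_factor := fun p => if prime_dec (Z.of_nat p)
                              then sumR (fun j => pow_ln x (Nat.pow p j)) (S n) else 1).
assert (Hfactor_pos : forall p, 0 < euler_factor p).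
{ intros p. unfold euler_factor. destruct prime_dec; [|lra].
  rewrite sumR_Sl. pose proof (pow_ln_pos x (Nat.pow p 0)).
  assert (0 <= sumR (fun j => pow_ln x (Nat.pow p (S j))) n)
    by (apply sumR_nonneg; intros; apply Rlt_le, pow_ln_pos).
  lra. }
assert (Heuler : F n x <= prodR euler_factor (S n)).
{ rewrite F_eq_sumR by exact Hn. apply EulerProduct.sumR_le_prodR_primes.
  - intros k; apply Rlt_le, pow_ln_pos.
  - apply pow_ln_1.
  - intros a b Ha Hb; apply pow_ln_mult; lia. }
apply Rle_trans with (ln (prodR euler_factor (S n))).
{ apply ln_le; [pose proof (F_ge_1 n x Hn); lra | exact Heuler]. }
rewrite ln_prodR by (intros; apply Hfactor_pos).
apply sumR_le. intros p _. unfold euler_factor. destruct prime_dec as [Hp|Hp].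
- pose proof (Zprime_nat_gt1 p Hp).
  rewrite (sumR_ext _ (pow (pow_ln x p))) by (intros; apply pow_ln_pow; lia).
  apply ln_sumR_pow_le. split; [apply Rlt_le, pow_ln_pos | apply pow_ln_le_1; [|lia]; exact Hx].
- rewrite ln_1; lra.
Qed.

Definition prime_term (n p : nat) (x : R) : R :=
  sumR (fun m => pow_ln x p ^ S m / INR (S m) / x) n.

Definition dominant (n : nat) (x : R) : R :=
  sumR (fun p => if prime_dec (Z.of_nat p) then prime_term n p x else 0) (S n).

Lemma integrand_le_dominant n x : (1 <= n)%nat -> 0 < x <= 1 ->
  ln (F n x) / x <= dominant n x.
Proof.
intros Hn Hx.
apply Rle_trans with (/ x * sumR (fun p => if prime_dec (Z.of_nat p)
                               then sumR (fun m => pow_ln x p ^ S m / INR (S m)) n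
                               else 0) (S n)).
- unfold Rdiv. rewrite Rmult_comm.
  apply Rmult_le_compat_l; [apply Rlt_le, Rinv_0_lt_compat; lra|].
  apply ln_F_le; assumption.
- unfold dominant. rewrite <- sumR_scal_l. right. apply sumR_ext. intros p _.
  destruct prime_dec; [|ring]. unfold prime_term. rewrite <- sumR_scal_l.
  apply sumR_ext. intros m _. unfold Rdiv; ring.
Qed.

Lemma is_RInt_Rpower_div a eps : 0 < a -> 0 < eps ->
  is_RInt (fun x => Rpower x a / x) eps 1 ((1 - Rpower eps a) / a).
Proof.
intros Ha Heps.
assert (Hderiv : forall x, 0 < x -> is_derive (fun x => Rpower x a / a) x (Rpower x a / x)).
{ intros x Hx. unfold Rpower. evar_last; [auto_derive; [lra|reflexivity]|]. field; lra. }
assert (Hvalue : minus (Rpower 1 a / a) (Rpower eps a / a) = (1 - Rpower eps a) / a).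
{ unfold Rpower at 1. rewrite ln_1, Rmult_0_r, exp_0.
  unfold minus, plus, opp; simpl. field; lra. }
rewrite <- Hvalue.
apply (is_RInt_derive (fun x => Rpower x a / a)); intros x Hx;
  assert (0 < x) by (pose proof (Rmin_glb_lt eps 1 0 Heps Rlt_0_1); lra).
- apply Hderiv; assumption.
- apply (ex_derive_continuous (fun x => Rpower x a / x)).
  unfold Rpower. auto_derive. lra.
Qed.

Definition prime_term_integral (n p : nat) (eps : R) : R :=
  sumR (fun m => / INR (S m) *
                 ((1 - Rpower eps (INR (S m) * ln (INR p))) / (INR (S m) * ln (INR p)))) n.

Lemma is_RInt_prime_term n p eps : (1 < p)%nat -> 0 < eps ->
  is_RInt (prime_term n p) eps 1 (prime_term_integral n p eps).
Proof.
intros Hp Heps. apply is_RInt_sumR. intros m _.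
assert (Ha : 0 < INR (S m) * ln (INR p))
  by (apply Rmult_lt_0_compat; [apply lt_0_INR; lia|apply ln_INR_pos, Hp]).
apply (is_RInt_ext (fun x => scal (/ INR (S m)) (Rpower x (INR (S m) * ln (INR p)) / x))).
- intros x _. rewrite pow_ln_pow_Rpower. unfold scal; simpl; unfold mult; simpl.
  unfold Rdiv; ring.
- exact (is_RInt_scal _ _ _ (/ INR (S m)) _ (is_RInt_Rpower_div _ eps Ha Heps)).
Qed.

Lemma prime_term_integral_le n p eps : (1 < p)%nat -> 0 < eps ->
  prime_term_integral n p eps <= PI ^ 2 / 6 / ln (INR p).
Proof.
intros Hp Heps. pose proof (ln_INR_pos p Hp) as Hlnp.
apply Rle_trans with (sumR (fun m => / (INR m + 1) ^ 2) n / ln (INR p)).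
- unfold Rdiv. rewrite Rmult_comm, <- sumR_scal_l. apply sumR_le. intros m _.
  pose proof (pos_INR m).
  assert (0 <= Rpower eps (INR (S m) * ln (INR p))) by (apply Rlt_le, exp_pos).
  rewrite S_INR in *. apply Rmult_le_reg_l with ((INR m + 1) ^ 2 * ln (INR p));
    [apply Rmult_lt_0_compat; [apply pow_lt|]; lra|].
  field_simplify; repeat split; lra.
- pose proof (sum_inv_sqr_le n).
  unfold Rdiv. apply Rmult_le_compat_r; [apply Rlt_le, Rinv_0_lt_compat|]; lra.
Qed.

Lemma dominant_integral_le n eps : 0 < eps ->
  exists v, is_RInt (dominant n) eps 1 v /\ v <= PI ^ 2 / 6 * prime_inv_log_sum n.
Proof.
intros Heps.
exists (sumR (fun p => if prime_dec (Z.of_nat p) then prime_term_integral n p eps else 0) (S n)).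
split.
- apply (is_RInt_sumR (fun p x => if prime_dec (Z.of_nat p) then prime_term n p x else 0)).
  intros p _. destruct prime_dec as [Hp|Hp].
  + apply is_RInt_prime_term; [apply Zprime_nat_gt1, Hp|exact Heps].
  + apply is_RInt_zero.
- unfold prime_inv_log_sum. rewrite sum_f_R0_sumR, <- sumR_scal_l.
  apply sumR_le. intros p _. destruct prime_dec as [Hp|Hp]; [|lra].
  apply prime_term_integral_le; [apply Zprime_nat_gt1, Hp|exact Heps].
Qed.

Lemma ex_derive_F n x : (1 <= n)%nat -> 0 < x -> ex_derive (F n) x.
Proof.
intros Hn Hx. apply (ex_derive_ext (fun x => sumR (fun k => pow_ln x (S k)) n)).
- intros y. symmetry. apply F_eq_sumR, Hn.
- eexists. apply (is_derive_sumR (fun k x => pow_ln x (S k))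
                                  (fun k x => ln (INR (S k)) / x * pow_ln x (S k))).
  intros k _. unfold pow_ln, Rpower. auto_derive; [lra|].
  change (match k with O => 1 | S _ => INR k + 1 end) with (INR (S k)). field; lra.
Qed.

Lemma ex_RInt_integrand n a b : (1 <= n)%nat -> 0 < a <= b ->
  ex_RInt (fun x => ln (F n x) / x) a b.
Proof.
intros Hn Hab. apply (@ex_RInt_continuous R_CompleteNormedModule). intros x Hx.
rewrite Rmin_left, Rmax_right in Hx by lra.
apply (ex_derive_continuous (fun x => ln (F n x) / x)).
pose proof (F_ge_1 n x Hn).
auto_derive. repeat split; [apply ex_derive_F; [exact Hn|lra]|lra|lra].
Qed.

Lemma integrand_nonneg n x : (1 <= n)%nat -> 0 < x -> 0 <= ln (F n x) / x.
Proof.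
intros Hn Hx. apply Rdiv_le_0_compat; [|exact Hx].
rewrite <- ln_1. apply ln_le; [lra|apply F_ge_1, Hn].
Qed.

Lemma RInt_integrand_le n eps : (1 <= n)%nat -> 0 < eps <= 1 ->
  RInt (fun x => ln (F n x) / x) eps 1 <= PI ^ 2 / 6 * prime_inv_log_sum n.
Proof.
intros Hn Heps. destruct (dominant_integral_le n eps (proj1 Heps)) as [v [Hv Hvle]].
apply Rle_trans with v; [|exact Hvle].
rewrite <- (is_RInt_unique _ _ _ _ Hv).
apply RInt_le; [lra|apply ex_RInt_integrand; [exact Hn|lra]|eexists; exact Hv|].
intros x Hx. apply integrand_le_dominant; [exact Hn|lra].
Qed.

(* For [f >= 0] the integrals over [[eps, 1]] increase as [eps] decreases, so they converge
   to their supremum. *)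
Lemma improper_integral_0_1_nonneg (f : R -> R) (C : R) :
  (forall a b, 0 < a <= b -> ex_RInt f a b) ->
  (forall x, 0 < x -> 0 <= f x) ->
  (forall eps, 0 < eps <= 1 -> RInt f eps 1 <= C) ->
  exists L, improper_integral_0_1 f L /\ L <= C.
Proof.
intros Hint Hpos Hbound.
set (E := fun r => exists eps, 0 < eps <= 1 /\ r = RInt f eps 1).
destruct (completeness E) as [L [HLub HLleast]].
- exists C. intros r [eps [Heps ->]]. apply Hbound, Heps.
- exists (RInt f 1 1), 1. split; [lra|reflexivity].
- assert (Hmono : forall e1 e2, 0 < e1 <= e2 -> e2 <= 1 -> RInt f e2 1 <= RInt f e1 1).
  { intros e1 e2 H12 H2.
    rewrite <- (RInt_Chasles f e1 e2 1) by (apply Hint; lra).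
    assert (0 <= RInt f e1 e2)
      by (apply RInt_ge_0; [lra|apply Hint; lra|intros; apply Hpos; lra]).
    unfold plus; simpl; lra. }
  exists L. split; [split|].
  + intros eps Heps. exists (ex_RInt_Reals_0 _ _ _ (Hint eps 1 Heps)). exact I.
  + intros delta Hdelta.
    destruct (classic (exists eps, 0 < eps <= 1 /\ L - delta < RInt f eps 1))
      as [[e0 [He0 Hlt]]|Hnone].
    * exists e0. split; [lra|]. intros eps Heps Hle pr.
      rewrite <- (RInt_Reals f eps 1 pr).
      assert (RInt f eps 1 <= L) by (apply HLub; exists eps; split; [lra|reflexivity]).
      assert (RInt f e0 1 <= RInt f eps 1) by (apply Hmono; lra).
      apply Rabs_def1; lra.
    * exfalso. assert (L <= L - delta); [|lra].
      apply HLleast. intros r [eps [Heps ->]].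
      apply Rnot_lt_le. intros Hlt. apply Hnone. exists eps. split; assumption.
  + apply HLleast. intros r [eps [Heps ->]]. apply Hbound, Heps.
Qed.

Theorem mainTheorem2 (n : nat) (hn : (2 <= n)%nat) :
  exists L : R,
    improper_integral_0_1 (fun x => ln (F n x) / x) L /\
    PI ^ 2 / 6 * prime_inv_log_sum n >= L.
Proof.
assert (Hn : (1 <= n)%nat) by lia.
destruct (improper_integral_0_1_nonneg (fun x => ln (F n x) / x)
            (PI ^ 2 / 6 * prime_inv_log_sum n)) as [L [HL HLC]].
- intros a b Hab. apply ex_RInt_integrand; assumption.
- intros x Hx. apply integrand_nonneg; assumption.
- intros eps Heps. apply RInt_integrand_le; assumption.
- exists L. split; [exact HL | apply Rle_ge, HLC].
Qed.
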